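(* Let $U=(U_{ij})_{i,j=1}^M$, $U_{ij}\in M_M(\mathbb C)$, and $V=(V_{ab})_{a,b=1}^N$, $V_{ab}\in M_N(\mathbb C)$, be projective models and $Q\in M_{M\times N}(\mathbb T)$. Then the matrix $W^\circ=U\,{}_Q\!\otimes V$ given by $$(W^\circ_{ia,jb})_{kc,ld}=\frac{Q_{ka}Q_{lb}}{Q_{kb}Q_{la}}(U_{ij})_{kl}(V_{ab})_{cd}$$ is a projective model. Moreover, with $W=U\otimes_QV$, we have $W'=U'\,{}_Q\!\otimes V'$ and $(W^\circ)'=U'\otimes_QV'$.
   Context: A square matrix with entries in a $C^*$-algebra is magic if its entries are orthogonal projections and each row and column sums to $1$. For $U=(U_{ij})_{i,j=1}^n$, $U_{ij}\in M_n(\mathbb C)$, $U'$ is defined by $(U'_{kl})_{ij}=(U_{ij})_{kl}$; $U$ is a projective model if $U$ and $U'$ are magic. The deformed tensor product $U\otimes_QV$ is defined by $((U\otimes_QV)_{ia,jb})_{kc,ld}=\frac{Q_{ic}Q_{jd}}{Q_{id}Q_{jc}}(U_{ij})_{kl}(V_{ab})_{cd}$, and $U\,{}_Q\!\otimes V$ by the formula for $W^\circ$ in the statement ($i,j,k,l\in\{1,\dots,M\}$, $a,b,c,d\in\{1,\dots,N\}$). *)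

From mathcomp Require Import all_boot all_order all_algebra.
Set Implicit Arguments. Unset Strict Implicit. Unset Printing Implicit Defensive.
Import GRing.Theory Num.Theory.
Local Open Scope ring_scope.

(* Complex numbers are modelled by an arbitrary numClosedFieldType C
   (algebraically closed field with conjugation and norm; includes C). *)

Definition adjmx (C : numClosedFieldType) m n (A : 'M[C]_(m, n)) : 'M[C]_(n, m) :=
  (map_mx (fun z => z^*) A)^T.

Definition is_projection (C : numClosedFieldType) m (P : 'M[C]_m) : Prop :=
  adjmx P = P /\ P *m P = P.

Definition magic (C : numClosedFieldType) m n (U : 'M['M[C]_m]_n) : Prop :=
  [/\ forall i j, is_projection (U i j),
      forall i, \sum_j U i j = 1%:M
    & forall j, \sum_i U i j = 1%:M].

Definition mprime (C : numClosedFieldType) n (U : 'M['M[C]_n]_n) : 'M['M[C]_n]_n :=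
  \matrix_(k, l) \matrix_(i, j) U i j k l.

Definition projective_model (C : numClosedFieldType) n (U : 'M['M[C]_n]_n) : Prop :=
  magic U /\ magic (mprime U).

(* identification of 'I_(M*N) with pairs (i,a) in 'I_M * 'I_N
   (inverse of mxvec_index) *)
Definition pidx M N (x : 'I_(M * N)) : 'I_M * 'I_N :=
  enum_val (cast_ord (esym (mxvec_cast M N)) x).

Definition tensorQ (C : numClosedFieldType) M N (Q : 'M[C]_(M, N))
  (U : 'M['M[C]_M]_M) (V : 'M['M[C]_N]_N) : 'M['M[C]_(M * N)]_(M * N) :=
  \matrix_(x, y) \matrix_(z, w)
    let i := (pidx x).1 in let a := (pidx x).2 in
    let j := (pidx y).1 in let b := (pidx y).2 in
    let k := (pidx z).1 in let c := (pidx z).2 in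
    let l := (pidx w).1 in let d := (pidx w).2 in
    Q i c * Q j d / (Q i d * Q j c) * U i j k l * V a b c d.

Definition ltensorQ (C : numClosedFieldType) M N (Q : 'M[C]_(M, N))
  (U : 'M['M[C]_M]_M) (V : 'M['M[C]_N]_N) : 'M['M[C]_(M * N)]_(M * N) :=
  \matrix_(x, y) \matrix_(z, w)
    let i := (pidx x).1 in let a := (pidx x).2 in
    let j := (pidx y).1 in let b := (pidx y).2 in
    let k := (pidx z).1 in let c := (pidx z).2 in
    let l := (pidx w).1 in let d := (pidx w).2 in
    Q k a * Q l b / (Q k b * Q l a) * U i j k l * V a b c d.

From mathcomp Require Import all_boot all_order all_algebra ring.
Import GRing.Theory Num.Theory.

(* Each block of W° is a Kronecker product
     W°_{ia,jb} = (D U_ij D^* ) (x) V_ab,   D = diag_k (Q_ka / Q_kb),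
   and symmetrically W_{ia,jb} = U_ij (x) (E V_ab E^* ), E = diag_c (Q_ic / Q_jc),
   where D and E are unitary because |Q| = 1.  Unitary conjugates and Kronecker
   products of projections are projections.  Summing a row or column of blocks,
   first sum the conjugated factor, on whose index D does not depend: its sum 1
   leaves D D^* = 1, and the other factor's sum then gives 1 (x) 1 = 1;
   so W and W° are magic.  The prime exchanges outer and inner indices and
   with them the two shapes of phase, which gives both identities; in
   particular (W°)' is the magic matrix U' (x)_Q V'. *)

Set Implicit Arguments. Unset Strict Implicit. Unset Printing Implicit Defensive.
Local Open Scope ring_scope.

Section PairIndex.
Variables M N : nat.

Lemma pidx_mxvec_indexK : cancel (uncurry (@mxvec_index M N)) (@pidx M N).
Proof. by case=> i a; rewrite /pidx /= cast_ordK enum_rankK. Qed.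

Lemma pidx_mxvec_index i a : pidx (@mxvec_index M N i a) = (i, a).
Proof. exact: (pidx_mxvec_indexK (i, a)). Qed.

Lemma eq_mxvec_index i a j b :
  (@mxvec_index M N i a == mxvec_index j b) = (i == j) && (a == b).
Proof. by rewrite (inj_eq (can_inj pidx_mxvec_indexK) (i, a) (j, b)). Qed.

Lemma sum_mxvec_index (V : nmodType) (F : 'I_(M * N) -> V) :
  \sum_x F x = \sum_i \sum_a F (mxvec_index i a).
Proof.
by rewrite pair_big (reindex _ (curry_mxvec_bij M N)); apply: eq_bigr => -[].
Qed.

End PairIndex.

Section Adjoint.
Variable C : numClosedFieldType.

Lemma adjmxK m n (A : 'M[C]_(m, n)) : adjmx (adjmx A) = A.
Proof. by apply/matrixP => i j; rewrite !mxE conjCK. Qed.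

Lemma adjmxM m n p (A : 'M[C]_(m, n)) (B : 'M_(n, p)) :
  adjmx (A *m B) = adjmx B *m adjmx A.
Proof. by rewrite /adjmx map_mxM trmx_mul. Qed.

Lemma adjmx_diag n (d : 'rV[C]_n) :
  adjmx (diag_mx d) = diag_mx (map_mx Num.conj d).
Proof. by rewrite /adjmx map_diag_mx tr_diag_mx. Qed.

Lemma unitary_conj_projection n (D P : 'M[C]_n) :
  adjmx D *m D = 1%:M -> is_projection P -> is_projection (D *m P *m adjmx D).
Proof.
move=> DK [Psa Pid]; split; first by rewrite !adjmxM adjmxK Psa mulmxA.
by rewrite -!mulmxA (mulmxA (adjmx D)) DK mul1mx (mulmxA P) Pid.
Qed.

Lemma conjC_norm1 (x : C) : `|x| = 1 -> x^* = x^-1.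
Proof. by move=> x1; rewrite invC_norm x1 expr1n invr1 mul1r. Qed.

Definition phase_mx n (f : 'I_n -> C) : 'M[C]_n := diag_mx (\row_k f k).

Lemma phase_mxE n (f : 'I_n -> C) (A : 'M_n) k l :
  (phase_mx f *m A *m adjmx (phase_mx f)) k l = f k * A k l * (f l)^*.
Proof. by rewrite adjmx_diag mul_mx_diag mul_diag_mx !mxE. Qed.

Lemma phase_mx_unitary n (f : 'I_n -> C) : (forall k, `|f k| = 1) ->
  adjmx (phase_mx f) *m phase_mx f = 1%:M /\
  phase_mx f *m adjmx (phase_mx f) = 1%:M.
Proof.
move=> f1; rewrite adjmx_diag !mulmx_diag -diag_const_mx.
by split; congr diag_mx; apply/rowP => k; rewrite !mxE -?normCKC -?normCK f1 expr1n.
Qed.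
End Adjoint.

Section Kronecker.
Variables (R : comPzRingType) (M N : nat).

Definition kronmx (A : 'M[R]_M) (B : 'M[R]_N) : 'M[R]_(M * N) :=
  \matrix_(z, w) (A (pidx z).1 (pidx w).1 * B (pidx z).2 (pidx w).2).

Lemma kronmxE A B i a j b :
  kronmx A B (mxvec_index i a) (mxvec_index j b) = A i j * B a b.
Proof. by rewrite mxE !pidx_mxvec_index. Qed.

Lemma mulmx_kron A A' B B' :
  kronmx A B *m kronmx A' B' = kronmx (A *m A') (B *m B').
Proof.
apply/matrixP => z w; case/mxvec_indexP: z => i a; case/mxvec_indexP: w => j b.
rewrite kronmxE !mxE sum_mxvec_index big_distrlr /=.
by apply: eq_bigr => k _; apply: eq_bigr => c _; rewrite !kronmxE mulrACA.
Qed.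

Lemma kronmx1 : kronmx 1%:M 1%:M = 1%:M.
Proof.
apply/matrixP => z w; case/mxvec_indexP: z => i a; case/mxvec_indexP: w => j b.
by rewrite kronmxE !mxE eq_mxvec_index -natrM mulnb.
Qed.

Lemma kronmx_suml (I : finType) (A : I -> 'M_M) B :
  kronmx (\sum_j A j) B = \sum_j kronmx (A j) B.
Proof.
apply/matrixP => z w; rewrite summxE !mxE summxE mulr_suml.
by apply: eq_bigr => j _; rewrite mxE.
Qed.

Lemma kronmx_sumr (I : finType) A (B : I -> 'M_N) :
  kronmx A (\sum_j B j) = \sum_j kronmx A (B j).
Proof.
apply/matrixP => z w; rewrite summxE !mxE summxE mulr_sumr.
by apply: eq_bigr => j _; rewrite mxE.
Qed.

End Kronecker.

Lemma adjmx_kron (C : numClosedFieldType) M N (A : 'M[C]_M) (B : 'M[C]_N) :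
  adjmx (kronmx A B) = kronmx (adjmx A) (adjmx B).
Proof. by apply/matrixP => z w; rewrite !mxE rmorphM. Qed.

Lemma kron_projection (C : numClosedFieldType) M N (A : 'M[C]_M) (B : 'M[C]_N) :
  is_projection A -> is_projection B -> is_projection (kronmx A B).
Proof.
move=> [Asa Aid] [Bsa Bid].
by split; rewrite ?adjmx_kron ?mulmx_kron ?Asa ?Bsa ?Aid ?Bid.
Qed.

Section TwistedTensor.
Variables (C : numClosedFieldType) (M N : nat) (Q : 'M[C]_(M, N)).
Hypothesis Q1 : forall k a, `|Q k a| = 1.

Let Q_neq0 k a : Q k a != 0.
Proof. by rewrite -normr_eq0 Q1 oner_neq0. Qed.

Let norm_divQ k a l b : `|Q k a / Q l b| = 1.
Proof. by rewrite normrM normfV !Q1 invr1 mulr1. Qed.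

Lemma ltensorQ_block U V i a j b :
  ltensorQ Q U V (mxvec_index i a) (mxvec_index j b) =
  let D := phase_mx (fun k => Q k a / Q k b) in
  kronmx (D *m U i j *m adjmx D) (V a b).
Proof.
apply/matrixP => z w; case/mxvec_indexP: z => k c; case/mxvec_indexP: w => l d.
rewrite kronmxE phase_mxE !mxE !pidx_mxvec_index /= conjC_norm1 ?norm_divQ //.
by field; rewrite !Q_neq0.
Qed.

Lemma tensorQ_block U V i a j b :
  tensorQ Q U V (mxvec_index i a) (mxvec_index j b) =
  let D := phase_mx (fun c => Q i c / Q j c) in
  kronmx (U i j) (D *m V a b *m adjmx D).
Proof.
apply/matrixP => z w; case/mxvec_indexP: z => k c; case/mxvec_indexP: w => l d.
rewrite kronmxE phase_mxE !mxE !pidx_mxvec_index /= conjC_norm1 ?norm_divQ //.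
by field; rewrite !Q_neq0.
Qed.

Lemma magic_ltensorQ U V : magic U -> magic V -> magic (ltensorQ Q U V).
Proof.
move=> [Up Ur Uc] [Vp Vr Vc].
have D1 a b := phase_mx_unitary (fun k => norm_divQ k a k b).
split.
- case/mxvec_indexP => i a; case/mxvec_indexP => j b; rewrite ltensorQ_block.
  exact/kron_projection/Vp/unitary_conj_projection/Up/(D1 a b).1.
- case/mxvec_indexP => i a; rewrite sum_mxvec_index exchange_big /=.
  under eq_bigr do rewrite (eq_bigr _ (fun j _ => ltensorQ_block U V i a j _)) /=.
  under eq_bigr do rewrite -kronmx_suml -mulmx_suml -mulmx_sumr Ur mulmx1 (D1 a _).2.
  by rewrite -kronmx_sumr Vr kronmx1.
- case/mxvec_indexP => j b; rewrite sum_mxvec_index exchange_big /=.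
  under eq_bigr do rewrite (eq_bigr _ (fun i _ => ltensorQ_block U V i _ j b)) /=.
  under eq_bigr do rewrite -kronmx_suml -mulmx_suml -mulmx_sumr Uc mulmx1 (D1 _ b).2.
  by rewrite -kronmx_sumr Vc kronmx1.
Qed.

Lemma magic_tensorQ U V : magic U -> magic V -> magic (tensorQ Q U V).
Proof.
move=> [Up Ur Uc] [Vp Vr Vc].
have D1 i j := phase_mx_unitary (fun c => norm_divQ i c j c).
split.
- case/mxvec_indexP => i a; case/mxvec_indexP => j b; rewrite tensorQ_block.
  exact/kron_projection/unitary_conj_projection/Vp/(D1 i j).1/Up.
- case/mxvec_indexP => i a; rewrite sum_mxvec_index.
  under eq_bigr do rewrite (eq_bigr _ (fun b _ => tensorQ_block U V i a _ b)) /=.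
  under eq_bigr do rewrite -kronmx_sumr -mulmx_suml -mulmx_sumr Vr mulmx1 (D1 i _).2.
  by rewrite -kronmx_suml Ur kronmx1.
- case/mxvec_indexP => j b; rewrite sum_mxvec_index.
  under eq_bigr do rewrite (eq_bigr _ (fun a _ => tensorQ_block U V _ a j b)) /=.
  under eq_bigr do rewrite -kronmx_sumr -mulmx_suml -mulmx_sumr Vc mulmx1 (D1 _ j).2.
  by rewrite -kronmx_suml Uc kronmx1.
Qed.

End TwistedTensor.

Lemma mprime_tensorQ (C : numClosedFieldType) M N (Q : 'M[C]_(M, N)) U V :
  mprime (tensorQ Q U V) = ltensorQ Q (mprime U) (mprime V).
Proof. by apply/matrixP => x y; apply/matrixP => z w; rewrite !mxE /= !mxE. Qed.

Lemma mprime_ltensorQ (C : numClosedFieldType) M N (Q : 'M[C]_(M, N)) U V :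
  mprime (ltensorQ Q U V) = tensorQ Q (mprime U) (mprime V).
Proof. by apply/matrixP => x y; apply/matrixP => z w; rewrite !mxE /= !mxE. Qed.

Theorem proposition2p5 (C : numClosedFieldType) (M N : nat)
  (U : 'M['M[C]_M]_M) (V : 'M['M[C]_N]_N) (Q : 'M[C]_(M, N)) :
  projective_model U -> projective_model V ->
  (forall k a, `|Q k a| = 1) ->
  [/\ projective_model (ltensorQ Q U V),
      mprime (tensorQ Q U V) = ltensorQ Q (mprime U) (mprime V)
    & mprime (ltensorQ Q U V) = tensorQ Q (mprime U) (mprime V)].
Proof.
move=> [mU mU'] [mV mV'] Q1.
split; [split | exact: mprime_tensorQ | exact: mprime_ltensorQ].
- exact: magic_ltensorQ.
- by rewrite mprime_ltensorQ; apply: magic_tensorQ.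
Qed.
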